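(* Let $A$ and $B$ be automata with $A\le_{*T}B$. Then (1) there exist automata $C,D$ with $A\le_H C$, $C\le_P D$ and $D\le_R B$; (2) if moreover $B$ has finite invisible nondeterminism, then there exist automata $C,D$ with $A\le_H C$, $C\le_{iP} D$ and $D\le_R B$.
   Context: An automaton $A$ consists of a set $\mathrm{states}(A)$ of states, a nonempty set $\mathrm{start}(A)\subseteq\mathrm{states}(A)$ of start states, a set $\mathrm{acts}(A)$ of actions containing a distinguished internal action $\tau$, and a set $\mathrm{steps}(A)\subseteq\mathrm{states}(A)\times\mathrm{acts}(A)\times\mathrm{states}(A)$ of steps; write $s\xrightarrow{a}_A t$ for $(s,a,t)\in\mathrm{steps}(A)$. An execution fragment of $A$ is a finite or infinite alternating sequence $s_0a_1s_1a_2s_2\cdots$ of states and actions, beginning with a state and, if finite, ending with a state, such that $s_{i-1}\xrightarrow{a_i}_A s_i$ for all $i>0$. An execution is an execution fragment whose first state is a start state. The trace of an execution fragment is the subsequence of its non-$\tau$ actions; a trace of $A$ is the trace of some execution of $A$, and $\mathrm{traces}^*(A)$ is the set of finite traces of $A$. $A\le_{*T}B$ means $\mathrm{traces}^*(A)\subseteq\mathrm{traces}^*(B)$. For states $s,t$ and a finite sequence $\beta$ of non-$\tau$ actions, write $s\stackrel{\beta}{\Rightarrow}_A t$ if $A$ has a finite execution fragment starting in $s$, with trace $\beta$, ending in $t$. $A$ has finite invisible nondeterminism if $\mathrm{start}(A)$ is finite and for every state $s$ and finite sequence $\beta$ of non-$\tau$ actions there are only finitely many $t$ with $s\stackrel{\beta}{\Rightarrow}_A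 t$. For a relation $R$ write $R[s]=\{u\mid (s,u)\in R\}$; $R$ is image-finite if every $R[s]$ is finite. A step refinement from $A$ to $B$ is a partial function $r:\mathrm{states}(A)\rightharpoonup\mathrm{states}(B)$ such that (1) if $s\in\mathrm{start}(A)$ then $s\in\mathrm{dom}(r)$ and $r(s)\in\mathrm{start}(B)$; (2) if $s\xrightarrow{a}_A t$ and $s\in\mathrm{dom}(r)$ then $t\in\mathrm{dom}(r)$ and either $r(s)=r(t)$ and $a=\tau$, or $r(s)\xrightarrow{a}_B r(t)$. Write $A\le_R B$ if one exists. A normed forward simulation from $A$ to $B$ is a pair $(f,n)$ where $f\subseteq\mathrm{states}(A)\times\mathrm{states}(B)$ and $n:\mathrm{steps}(A)\times\mathrm{states}(B)\to S$ for some set $S$ with a well-founded strict order $<$, such that: (1) if $s\in\mathrm{start}(A)$ then $f[s]\cap\mathrm{start}(B)\neq\emptyset$; (2) if $s\xrightarrow{a}_A t$ and $u\in f[s]$ then (a) $u\in f[t]$ and $a=\tau$, or (b) there is $v\in f[t]$ with $u\xrightarrow{a}_B v$, or (c) there is $v\in f[s]$ with $u\xrightarrow{\tau}_B v$ and $n(s\xrightarrow{a}t,v)<n(s\xrightarrow{a}t,u)$. A normed backward simulation from $A$ to $B$ is a pair $(b,n)$ where $b\subseteq\mathrm{states}(A)\times\mathrm{states}(B)$ is total (every $s\in\mathrm{states}(A)$ has $b[s]\neq\emptyset$) and $n:(\mathrm{steps}(A)\cup\mathrm{start}(A))\times\mathrm{states}(B)\to S$ for some set $S$ with a well-founded strict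 order $<$, such that: (1) if $s\in\mathrm{start}(A)$ and $u\in b[s]$ then (a) $u\in\mathrm{start}(B)$, or (b) there is $v\in b[s]$ with $v\xrightarrow{\tau}_B u$ and $n(s,v)<n(s,u)$; (2) if $t\xrightarrow{a}_A s$ and $u\in b[s]$ then (a) $u\in b[t]$ and $a=\tau$, or (b) there is $v\in b[t]$ with $v\xrightarrow{a}_B u$, or (c) there is $v\in b[s]$ with $v\xrightarrow{\tau}_B u$ and $n(t\xrightarrow{a}s,v)<n(t\xrightarrow{a}s,u)$. A normed history relation from $A$ to $B$ is a pair $(r,n)$ such that $r$ is a step refinement from $B$ to $A$ and $(r^{-1},n)$ is a normed forward simulation from $A$ to $B$; write $A\le_H B$ if one exists. A normed prophecy relation from $A$ to $B$ is a pair $(r,n)$ such that $r$ is a step refinement from $B$ to $A$ and $(r^{-1},n)$ is a normed backward simulation from $A$ to $B$; write $A\le_P B$ if one exists, and $A\le_{iP}B$ if one exists with $r^{-1}$ image-finite. *)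

From mathcomp Require Import all_boot.
From Stdlib Require List.

Set Implicit Arguments.
Unset Strict Implicit.
Unset Printing Implicit Defensive.

Record automaton (Act : eqType) (tau : Act) : Type := Automaton {
  states : Type;
  start : states -> Prop;
  start_nonempty : exists s, start s;
  acts : Act -> Prop;
  acts_tau : acts tau;
  steps : states -> Act -> states -> Prop;
  steps_acts : forall s a t, steps s a t -> acts a
}.

Arguments automaton : clear implicits.
Arguments states {Act tau}.
Arguments start {Act tau}.
Arguments acts {Act tau}.
Arguments steps {Act tau}.

Section Defs.
Variables (Act : eqType) (tau : Act).
Notation aut := (automaton Act tau).

(* A finite execution fragment starting in [s] is given by [s] and the list
   [(a1,s1); (a2,s2); ...] with s_{i-1} -a_i-> s_i. *)
Fixpoint frag_ok (A : aut) (s : states A) (l : seq (Act * states A)%type) : Prop :=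
  match l with
  | [::] => True
  | (a, t) :: l' => steps A s a t /\ frag_ok t l'
  end.

Definition frag_last (A : aut) (s : states A) (l : seq (Act * states A)%type) : states A :=
  last s [seq p.2 | p <- l].

Definition frag_trace (A : aut) (l : seq (Act * states A)%type) : seq Act :=
  [seq p.1 | p <- l & p.1 != tau].

Definition weak_step (A : aut) (s : states A) (beta : seq Act) (t : states A) : Prop :=
  exists l, frag_ok s l /\ frag_trace l = beta /\ frag_last s l = t.

Definition ftraces (A : aut) (beta : seq Act) : Prop :=
  exists s0 t, start A s0 /\ weak_step s0 beta t.

Definition le_T (A B : aut) : Prop := forall beta, ftraces A beta -> ftraces B beta.

Definition finiteP (T : Type) (P : T -> Prop) : Prop :=
  exists l : list T, forall x, P x -> List.In x l.

Definition fin_invis_nondet (A : aut) : Prop :=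
  finiteP (start A) /\
  forall (s : states A) (beta : seq Act),
    (forall a, a \in beta -> a != tau) -> finiteP (fun t => weak_step s beta t).

Definition image_finite (T U : Type) (R : T -> U -> Prop) : Prop :=
  forall s, finiteP (R s).

(* step refinement: partial function represented as an option-valued function *)
Definition step_refinement (A B : aut) (r : states A -> option (states B)) : Prop :=
  (forall s, start A s -> exists u, r s = Some u /\ start B u) /\
  (forall s a t, steps A s a t -> forall u, r s = Some u ->
     exists v, r t = Some v /\ ((u = v /\ a = tau) \/ steps B u a v)).

Definition le_R (A B : aut) : Prop := exists r, @step_refinement A B r.

Definition forward_sim_cond (A B : aut) (f : states A -> states B -> Prop)
  (S : Type) (lt : S -> S -> Prop)
  (n : forall s a t, steps A s a t -> states B -> S) : Prop :=
  (forall s, start A s -> exists u, f s u /\ start B u) /\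
  (forall s a t (h : steps A s a t) u, f s u ->
     (f t u /\ a = tau) \/
     (exists v, f t v /\ steps B u a v) \/
     (exists v, f s v /\ steps B u tau v /\ lt (n s a t h v) (n s a t h u))).

Definition normed_forward_sim (A B : aut) (f : states A -> states B -> Prop) : Prop :=
  exists (S : Type) (lt : S -> S -> Prop) n, well_founded lt /\ forward_sim_cond f lt n.

Definition backward_sim_cond (A B : aut) (b : states A -> states B -> Prop)
  (S : Type) (lt : S -> S -> Prop)
  (n0 : forall s, start A s -> states B -> S)
  (n : forall t a s, steps A t a s -> states B -> S) : Prop :=
  (forall s, exists u, b s u) /\
  (forall s (h : start A s) u, b s u ->
     start B u \/
     (exists v, b s v /\ steps B v tau u /\ lt (n0 s h v) (n0 s h u))) /\
  (forall t a s (h : steps A t a s) u, b s u ->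
     (b t u /\ a = tau) \/
     (exists v, b t v /\ steps B v a u) \/
     (exists v, b s v /\ steps B v tau u /\ lt (n t a s h v) (n t a s h u))).

Definition normed_backward_sim (A B : aut) (b : states A -> states B -> Prop) : Prop :=
  exists (S : Type) (lt : S -> S -> Prop) n0 n,
    well_founded lt /\ backward_sim_cond b lt n0 n.

Definition inv_rel (A B : aut) (r : states B -> option (states A)) :
  states A -> states B -> Prop := fun s u => r u = Some s.

Definition le_H (A B : aut) : Prop :=
  exists r : states B -> option (states A),
    @step_refinement B A r /\ normed_forward_sim (inv_rel r).

Definition le_P (A B : aut) : Prop :=
  exists r : states B -> option (states A),
    @step_refinement B A r /\ normed_backward_sim (inv_rel r).

Definition le_iP (A B : aut) : Prop :=
  exists r : states B -> option (states A),
    @step_refinement B A r /\ image_finite (inv_rel r) /\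
    normed_backward_sim (inv_rel r).

End Defs.

From mathcomp Require Import all_boot.
From Stdlib Require Import Classical ClassicalEpsilon ProofIrrelevance Wf_nat.
From Stdlib Require List.

Set Implicit Arguments.
Unset Strict Implicit.

(* C is the history automaton of A: a state of A paired with the trace by which
   it was reached, so that A <=_H C. D pairs every state c of C with every state
   w of B reachable by the trace recorded in c, moving both components in
   lock-step; projecting onto B gives D <=_R B, and projecting onto C gives a
   refinement whose inverse is a backward simulation. Trace inclusion makes it
   total, and going backwards from (c, w) follows the last step of a SHORTEST
   execution of B reaching w with the trace of c, whose length is the norm.
   Image-finiteness only asks that finitely many w are reachable by a given
   trace, which is finite invisible nondeterminism of B. *)

Section Automata.
Variables (Act : eqType) (tau : Act).
Notation aut := (automaton Act tau).

Definition trace_snoc (beta : seq Act) (a : Act) : seq Act :=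
  if a != tau then rcons beta a else beta.

Definition steps_or_stutter (A : aut) (s : states A) (a : Act) (t : states A) : Prop :=
  (s = t /\ a = tau) \/ steps A s a t.

Section Fragments.
Variable A : aut.

Lemma frag_last_rcons (s : states A) l a t : frag_last s (rcons l (a, t)) = t.
Proof. by rewrite /frag_last map_rcons last_rcons. Qed.

Lemma frag_ok_rcons (s : states A) l a t :
  frag_ok s (rcons l (a, t)) <-> frag_ok s l /\ steps A (frag_last s l) a t.
Proof.
elim: l s => [|[b u] l IH] s /=; first by split; case.
by rewrite IH; tauto.
Qed.

Lemma frag_trace_rcons (l : seq (Act * states A)) a t :
  frag_trace (rcons l (a, t)) = trace_snoc (frag_trace l) a.
Proof.
by rewrite /frag_trace /trace_snoc filter_rcons /=; case: ifP; rewrite ?map_rcons.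
Qed.

Lemma frag_trace_visible (l : seq (Act * states A)) a : a \in frag_trace l -> a != tau.
Proof.
elim: l => [|[b u] l IH] //=; rewrite /frag_trace /=.
by case: ifP => Hb //=; rewrite inE => /orP [/eqP ->|/IH].
Qed.

Definition reachable_with (beta : seq Act) (s : states A) : Prop :=
  exists s0, start A s0 /\ weak_step s0 beta s.

Definition reach_len (beta : seq Act) (s : states A) (k : nat) : Prop :=
  exists s0 l, start A s0 /\ frag_ok s0 l /\ frag_trace l = beta /\
    frag_last s0 l = s /\ size l = k.

Lemma reachable_with_start s0 : start A s0 -> reachable_with [::] s0.
Proof. by move=> Hs0; exists s0; split => //; exists [::]. Qed.

Lemma reachable_with_step beta s a t :
  reachable_with beta s -> steps A s a t -> reachable_with (trace_snoc beta a) t.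
Proof.
move=> [s0 [Hs0 [l [Hok [<- <-]]]]] Hst; exists s0; split => //.
exists (rcons l (a, t)).
by rewrite frag_ok_rcons frag_trace_rcons frag_last_rcons.
Qed.

Lemma reachable_with_visible beta s : reachable_with beta s -> forall a, a \in beta -> a != tau.
Proof. by move=> [_ [_ [l [_ [<- _]]]]]; exact: frag_trace_visible. Qed.

Lemma shortest_exec beta s : reachable_with beta s ->
  exists s0 l, start A s0 /\ frag_ok s0 l /\ frag_trace l = beta /\
    frag_last s0 l = s /\ forall j, reach_len beta s j -> size l <= j.
Proof.
move=> [s0 [Hs0 [l [Hok [Htr Hl]]]]].
have Hk : exists k, reach_len beta s k by exists (size l), s0, l.
have [k [[[u0 [m [Hu0 [Hm [Htm [Hlm <-]]]]]] Hmin] _]] :=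
  dec_inh_nat_subset_has_unique_least_element (reach_len beta s) (fun n => classic _) Hk.
by exists u0, m; do 4!split => //; move=> j /Hmin /leP.
Qed.

End Fragments.

Lemma finiteP_inj (T U : Type) (P : T -> Prop) (Q : U -> Prop) (f : T -> U) :
  finiteP Q -> (forall x, P x -> Q (f x)) ->
  (forall x y, P x -> P y -> f x = f y -> x = y) -> finiteP P.
Proof.
move=> [l Hl] PQ Hinj.
pose g u : list T :=
  match excluded_middle_informative (exists x, P x /\ f x = u) with
  | left ex => (proj1_sig (constructive_indefinite_description _ ex) :: nil)%list
  | right _ => nil
  end.
exists (List.flat_map g l) => x Px; apply/List.in_flat_map; exists (f x).
split; first exact/Hl/PQ.
rewrite /g; case: excluded_middle_informative => [ex|]; last by case; exists x.
case: constructive_indefinite_description => y [Py Ey] /=; left; exact: Hinj.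
Qed.

Lemma fin_invis_nondet_reachable (B : aut) beta :
  fin_invis_nondet B -> (forall a, a \in beta -> a != tau) ->
  finiteP (reachable_with (A := B) beta).
Proof.
move=> [[starts Hstarts] Hweak] Hvis.
suff [W HW] : exists W, forall u0 w, List.In u0 starts -> weak_step u0 beta w -> List.In w W.
  by exists W => w [u0 [Hu0 Hw]]; exact: HW (Hstarts _ Hu0) Hw.
elim: starts {Hstarts} => [|u L [W HW]]; first by exists nil.
have [W1 HW1] := Hweak u beta Hvis.
exists (W1 ++ W)%list => u0 w [<-|Hin] Hw; apply: List.in_or_app; [left|right].
- exact: HW1.
- exact: HW Hin Hw.
Qed.

Section History.
Variable A : aut.

Record hist_state := HistState {
  hist_st : states A;
  hist_tr : seq Act;
  hist_reachable : reachable_with hist_tr hist_st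
}.

Definition hist_start (c : hist_state) : Prop := start A (hist_st c) /\ hist_tr c = [::].

Definition hist_step (c : hist_state) (a : Act) (c' : hist_state) : Prop :=
  steps A (hist_st c) a (hist_st c') /\ hist_tr c' = trace_snoc (hist_tr c) a.

Definition hist_of_start s0 (Hs0 : start A s0) : hist_state :=
  HistState (reachable_with_start Hs0).

Definition hist_succ (c : hist_state) a t (Hst : steps A (hist_st c) a t) : hist_state :=
  HistState (reachable_with_step (hist_reachable c) Hst).

Lemma hist_start_nonempty : exists c, hist_start c.
Proof. by have [s0 Hs0] := start_nonempty A; exists (hist_of_start Hs0). Qed.

Definition hist_aut : aut :=
  @Automaton Act tau hist_state hist_start hist_start_nonempty (acts A) (acts_tau A)
    hist_step (fun _ _ _ Hst => steps_acts Hst.1).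

Lemma le_H_hist : le_H A hist_aut.
Proof.
exists (fun c : hist_state => Some (hist_st c)); split.
- split; first by move=> c [Hc _]; exists (hist_st c).
  by move=> c a c' [Hst _] _ [<-]; exists (hist_st c'); split => //; right.
exists unit, (fun _ _ => False), (fun _ _ _ _ _ => tt); split.
  by move=> x; constructor.
split.
- by move=> s0 Hs0; exists (hist_of_start Hs0).
- by move=> s a t Hst c [Es]; subst s; right; left; exists (hist_succ Hst).
Qed.

End History.

Section Prophecy.
Variables A B : aut.
Notation C := (hist_aut A).

Record pstate := PState {
  ps_hist : hist_state A;
  ps_st : states B;
  ps_reachable : reachable_with (hist_tr ps_hist) ps_st
}.

Definition ps_tr (d : pstate) : seq Act := hist_tr (ps_hist d).

Definition ps_start (d : pstate) : Prop := hist_start (ps_hist d) /\ start B (ps_st d).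

Definition ps_step (d : pstate) (a : Act) (d' : pstate) : Prop :=
  steps_or_stutter (A := C) (ps_hist d) a (ps_hist d') /\ steps_or_stutter (ps_st d) a (ps_st d').

Lemma ps_start_nonempty : exists d, ps_start d.
Proof.
have [s0 Hs0] := start_nonempty A; have [u0 Hu0] := start_nonempty B.
by exists (PState (ps_hist := hist_of_start Hs0) (reachable_with_start Hu0)).
Qed.

Lemma ps_step_acts d a d' : ps_step d a d' -> acts B a.
Proof. by case=> _ [[_ ->]|Hst]; [exact: acts_tau | exact: steps_acts Hst]. Qed.

Definition prophecy_aut : aut :=
  @Automaton Act tau pstate ps_start ps_start_nonempty (acts B) (acts_tau B)
    ps_step ps_step_acts.

Lemma le_R_prophecy : le_R prophecy_aut B.
Proof.
exists (fun d : pstate => Some (ps_st d)); split.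
- by move=> d [_ Hd]; exists (ps_st d).
- by move=> d a d' [_ Hst] _ [<-]; exists (ps_st d').
Qed.

Definition ps_proj (d : pstate) : option (hist_state A) := Some (ps_hist d).

Lemma ps_proj_refinement : step_refinement (A := prophecy_aut) (B := C) ps_proj.
Proof.
split.
- by move=> d [Hd _]; exists (ps_hist d).
- by move=> d a d' [Hst _] _ [<-]; exists (ps_hist d').
Qed.

Definition ps_lt (d1 d2 : pstate) : Prop :=
  exists k, reach_len (ps_tr d1) (ps_st d1) k /\
    forall j, reach_len (ps_tr d2) (ps_st d2) j -> k < j.

Lemma wf_ps_lt : well_founded ps_lt.
Proof.
suff Hacc n d : reach_len (ps_tr d) (ps_st d) n -> Acc ps_lt d.
  by move=> d; constructor => d' [k [Hk _]]; exact: Hacc Hk.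
elim/lt_wf_ind: n d => n IH d Hn; constructor => d' [k [Hk Hlt]].
by apply: (IH k) Hk; apply/ltP; exact: Hlt Hn.
Qed.

(* Backward steps of the simulation retrace the last step of a shortest
   execution of B; dropping it strictly decreases the norm. *)
Lemma ps_last_step (d : pstate) :
  (start B (ps_st d) /\ ps_tr d = [::]) \/
  exists w x beta, steps B w x (ps_st d) /\ trace_snoc beta x = ps_tr d /\
    forall c : hist_state A, hist_tr c = beta ->
      exists v, ps_hist v = c /\ ps_st v = w /\ ps_lt v d.
Proof.
have [u0 [m [Hu0 [Hok [Htr [Hl Hmin]]]]]] := shortest_exec (ps_reachable d).
case/lastP: m Hok Htr Hl Hmin => [|m [x y]] Hok Htr Hl Hmin.
  by left; rewrite /ps_tr -Hl -Htr.
right; move/frag_ok_rcons: Hok => [Hok Hst].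
rewrite frag_last_rcons in Hl; rewrite frag_trace_rcons in Htr; subst y.
exists (frag_last u0 m), x, (frag_trace m); do 2!split => //.
move=> c Hc; have Hreach : reachable_with (hist_tr c) (frag_last u0 m).
  by rewrite Hc; exists u0; split => //; exists m.
exists (PState Hreach); do 2!split => //; exists (size m); split.
- by exists u0, m; rewrite /ps_tr /= Hc.
- by move=> j /Hmin; rewrite size_rcons.
Qed.

Lemma trace_snoc_nil beta x : trace_snoc beta x = [::] -> x = tau /\ beta = [::].
Proof. by rewrite /trace_snoc; case: eqP => [->|_ /(congr1 size)]; rewrite ?size_rcons. Qed.

Lemma trace_snoc_rcons beta x gamma a : a != tau ->
  trace_snoc beta x = rcons gamma a ->
  (x = a /\ beta = gamma) \/ (x = tau /\ beta = rcons gamma a).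
Proof.
rewrite /trace_snoc => Ha; case: eqP => [->|/eqP Hx /eqP]; first by right.
by rewrite eqseq_rcons => /andP [/eqP -> /eqP ->]; left.
Qed.

Lemma ps_inv_total : le_T A B -> forall c : hist_state A, exists d, ps_proj d = Some c.
Proof.
move=> HT c; have [u0 [w [Hu0 Hw]]] : ftraces B (hist_tr c).
  by apply: HT; have [s0 [Hs0 Hs]] := hist_reachable c; exists s0, (hist_st c).
have Hreach : reachable_with (hist_tr c) w by exists u0.
by exists (PState Hreach).
Qed.

Lemma ps_inv_start (c : hist_state A) (Hc : hist_start c) (d : pstate) :
  ps_hist d = c ->
  ps_start d \/ (exists v, ps_hist v = c /\ ps_step v tau d /\ ps_lt v d).
Proof.
move=> Ed; have Htr : ps_tr d = [::] by rewrite /ps_tr Ed; case: Hc.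
case: (ps_last_step d) => [[Hd _]|[w [x [beta [Hst [Hbeta Hback]]]]]].
  by left; rewrite /ps_start Ed.
right; move: Hbeta; rewrite Htr => /trace_snoc_nil [Ex Eb]; subst x.
have [v [Ev [Hw Hlt]]] : exists v, ps_hist v = c /\ ps_st v = w /\ ps_lt v d.
  by apply: Hback; rewrite Eb -Htr /ps_tr Ed.
by exists v; do 2!split => //; split; [left; rewrite Ev Ed | right; rewrite Hw].
Qed.

Lemma ps_inv_step (t s : hist_state A) a (Hts : hist_step t a s) (d : pstate) :
  ps_hist d = s ->
  (exists v, ps_hist v = t /\ ps_step v a d) \/
  (exists v, ps_hist v = s /\ ps_step v tau d /\ ps_lt v d).
Proof.
move=> Ed; case: (eqVneq a tau) => Ha.
  subst a; have Hreach : reachable_with (hist_tr t) (ps_st d).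
    by have := ps_reachable d; rewrite Ed Hts.2 /trace_snoc eqxx.
  by left; exists (PState Hreach); split => //; split; [right; rewrite Ed | left].
have Htr : ps_tr d = rcons (hist_tr t) a by rewrite /ps_tr Ed Hts.2 /trace_snoc Ha.
case: (ps_last_step d) => [[_ Hnil]|[w [x [beta [Hst [Hbeta Hback]]]]]].
  by move: Hnil; rewrite Htr => /(congr1 size); rewrite size_rcons.
rewrite Htr in Hbeta; case: (trace_snoc_rcons Ha Hbeta) => [[Ex Eb]|[Ex Eb]]; subst x.
- have [v [Ev [Hw _]]] := Hback t (esym Eb).
  by left; exists v; split => //; split; right; rewrite ?Ev ?Ed ?Hw.
- have [v [Ev [Hw Hlt]]] : exists v, ps_hist v = s /\ ps_st v = w /\ ps_lt v d.
    by apply: Hback; rewrite Eb -Htr /ps_tr Ed.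
  by right; exists v; do 2!split => //; split; [left; rewrite Ev Ed | right; rewrite Hw].
Qed.

Lemma ps_inv_backward_sim :
  le_T A B -> normed_backward_sim (inv_rel (A := C) (B := prophecy_aut) ps_proj).
Proof.
move=> HT; exists pstate, ps_lt, (fun _ _ d => d), (fun _ _ _ _ d => d).
split; first exact: wf_ps_lt.
split; first exact: ps_inv_total.
split.
- move=> c Hc d [Ed]; case: (ps_inv_start Hc Ed) => [Hd|[v [Ev Hv]]]; [left|right] => //.
  by exists v; rewrite /inv_rel /ps_proj Ev.
- move=> t a s Hts d [Ed]; right.
  case: (ps_inv_step Hts Ed) => [[v [Ev Hv]]|[v [Ev Hv]]]; [left|right];
    by exists v; rewrite /inv_rel /ps_proj Ev.
Qed.

Lemma ps_inv_image_finite :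
  fin_invis_nondet B -> image_finite (inv_rel (A := C) (B := prophecy_aut) ps_proj).
Proof.
move=> Hfin c; apply: (finiteP_inj (f := ps_st)).
- exact: fin_invis_nondet_reachable Hfin (reachable_with_visible (hist_reachable c)).
- by move=> d [<-]; exact: ps_reachable.
- move=> [c1 w1 p1] [c2 w2 p2] [/= E1] [/= E2] /= Ew; subst c1 c2 w2.
  by rewrite (proof_irrelevance _ p1 p2).
Qed.

End Prophecy.
End Automata.

Theorem mainTheorem4 (Act : eqType) (tau : Act) (A B : automaton Act tau) :
  le_T A B ->
  (exists C D : automaton Act tau, le_H A C /\ le_P C D /\ le_R D B) /\
  (fin_invis_nondet B ->
   exists C D : automaton Act tau, le_H A C /\ le_iP C D /\ le_R D B).
Proof.
move=> HT; have Hsim := ps_inv_backward_sim HT.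
split; [|move=> Hfin]; exists (hist_aut A), (prophecy_aut A B);
  (split; first exact: le_H_hist); (split; last exact: le_R_prophecy).
- by exists (@ps_proj _ _ A B); split; [exact: ps_proj_refinement | exact: Hsim].
- exists (@ps_proj _ _ A B); split; first exact: ps_proj_refinement.
  by split; [exact: ps_inv_image_finite | exact: Hsim].
Qed.
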